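(* For every integer $\ell\ge 3$, the diameter of $CK(3,\ell)$ is at most $2\ell-1$.
   Context: Let $\Sigma=\{0,1,\dots,d\}$. The cyclic Kautz digraph $CK(d,\ell)$ has as vertices all sequences $a_1\ldots a_\ell\in\Sigma^\ell$ with $a_i\neq a_{i+1}$ for $1\le i\le \ell-1$ and $a_1\neq a_\ell$, with an arc from $a_1\ldots a_\ell$ to $b_1\ldots b_\ell$ iff both are vertices and $b_i=a_{i+1}$ for $1\le i\le\ell-1$. The diameter is the maximum over ordered pairs of vertices of the directed distance. *)

From mathcomp Require Import all_boot.
Set Implicit Arguments. Unset Strict Implicit. Unset Printing Implicit Defensive.

(* Alphabet Sigma = {0,...,d} is 'I_d.+1; words of length l are l.-tuples. *)

Definition ck_vertex (d l : nat) (a : l.-tuple 'I_d.+1) : bool :=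
  [forall i : 'I_l, (i.+1 < l) ==> (nth ord0 a i != nth ord0 a i.+1)]
  && (head ord0 a != last ord0 a).

Definition ck_arc (d l : nat) (a b : l.-tuple 'I_d.+1) : bool :=
  [&& ck_vertex a, ck_vertex b &
      [forall i : 'I_l, (i.+1 < l) ==> (nth ord0 b i == nth ord0 a i.+1)]].

Definition ck_dist_le (d l : nat) (a b : l.-tuple 'I_d.+1) (k : nat) : Prop :=
  exists p : seq (l.-tuple 'I_d.+1),
    [/\ path (@ck_arc d l) a p, last a p = b & size p <= k].

Definition ck_diam_le (d l k : nat) : Prop :=
  forall a b : l.-tuple 'I_d.+1, ck_vertex a -> ck_vertex b -> ck_dist_le a b k.

From mathcomp Require Import all_boot zify.

Set Implicit Arguments. Unset Strict Implicit. Unset Printing Implicit Defensive.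

(* A walk of length m from A to B in CK(d,l) is a word of length m + l that
   starts with A, ends with B and all of whose windows of length l are
   vertices: letters at distance 1 and at distance l - 1 differ.  For
   m = 2l - 1 the middle letters c_0 ... c_(l-2) must avoid a_(i+1), b_i and
   c_(i+1) (where c_(l-1) = b_0), and c_0 must moreover avoid a_(l-1).  Filling
   them from right to left, with at least four letters each c_i has a free
   value, so only the last condition can fail.  It fails only if every choice
   was forced; the forced chain starting from c_0 = a_(l-1) then also satisfies
   c_(i+1) != a_(i+1), so A c_1 ... c_(l-2) B is a word for a walk of length
   2l - 2. *)

Section Walks.

Variables d l : nat.

Lemma ck_vertexP (a : l.-tuple 'I_d.+1) :
  reflect ((forall i, i.+1 < l -> nth ord0 a i != nth ord0 a i.+1)
           /\ nth ord0 a 0 != nth ord0 a l.-1)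
          (ck_vertex a).
Proof.
rewrite /ck_vertex -nth0 -nth_last size_tuple.
apply: (iffP andP) => [[/forallP adj end_a] | [adj end_a]]; split=> //.
  by move=> i il; exact: (implyP (adj (Ordinal (ltnW il))) il).
by apply/forallP => i; apply/implyP; apply: adj.
Qed.

Lemma ck_dist_le_refl (a : l.-tuple 'I_d.+1) : ck_dist_le a a 0.
Proof. by exists [::]. Qed.

Lemma ck_dist_le_rcons (a b c : l.-tuple 'I_d.+1) k :
  ck_dist_le a b k -> ck_arc b c -> ck_dist_le a c k.+1.
Proof.
move=> [p [ab_p <- size_p]] bc; exists (rcons p c).
by rewrite rcons_path ab_p bc last_rcons size_rcons.
Qed.

Lemma ck_dist_leW (a b : l.-tuple 'I_d.+1) m k :
  m <= k -> ck_dist_le a b m -> ck_dist_le a b k.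
Proof. by move=> mk [p [? ? size_p]]; exists p; split=> //; exact: leq_trans mk. Qed.

Definition window (f : nat -> 'I_d.+1) s : l.-tuple 'I_d.+1 :=
  Tuple (introT eqP (size_mkseq (fun i => f (s + i)) l)).

Lemma nth_window f s i : i < l -> nth ord0 (window f s) i = f (s + i).
Proof. exact: nth_mkseq. Qed.

Lemma window_eq f s (a : l.-tuple 'I_d.+1) :
  (forall i, i < l -> f (s + i) = nth ord0 a i) -> window f s = a.
Proof.
move=> fa; apply: val_inj; apply: (@eq_from_nth _ ord0) => [|i].
  by rewrite size_mkseq size_tuple.
by rewrite size_mkseq => il; rewrite nth_mkseq ?fa.
Qed.

Lemma window_vertex f s : 0 < l ->
  (forall i, i.+1 < l -> f (s + i) != f (s + i.+1)) -> f s != f (s + l.-1) ->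
  ck_vertex (window f s).
Proof.
move=> l_gt0 adj ends; apply/ck_vertexP; split.
  by move=> i il; rewrite !nth_window ?adj //; lia.
by rewrite !nth_window ?addn0 //; lia.
Qed.

Lemma window_arc f s :
  ck_vertex (window f s) -> ck_vertex (window f s.+1) ->
  ck_arc (window f s) (window f s.+1).
Proof.
move=> Vs Vs1; apply/and3P; split=> //; apply/forallP => i; apply/implyP => il.
by rewrite !nth_window // addSnnS.
Qed.

Lemma window_walk f m :
  (forall s, s <= m -> ck_vertex (window f s)) ->
  ck_dist_le (window f 0) (window f m) m.
Proof.
elim: m => [|m IHm] V; first exact: ck_dist_le_refl.
apply: ck_dist_le_rcons (IHm (fun s sm => V s (leqW sm))) _.
by apply: window_arc; apply: V.
Qed.

Lemma word_dist_le f m : 0 < l ->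
  (forall p, p.+1 < m + l -> f p != f p.+1) ->
  (forall s, s <= m -> f s != f (s + l.-1)) ->
  ck_dist_le (window f 0) (window f m) m.
Proof.
move=> l_gt0 adj ends; apply: window_walk => s sm.
apply: window_vertex => // [i il|]; last exact: ends.
by rewrite addnS; apply: adj; lia.
Qed.

Lemma glued_dist_le f m (a b : l.-tuple 'I_d.+1) : 0 < l ->
  ck_vertex a -> ck_vertex b ->
  (forall i, i < l -> f i = nth ord0 a i) ->
  (forall i, i < l -> f (m + i) = nth ord0 b i) ->
  (forall p, l.-1 <= p < m -> f p != f p.+1) ->
  (forall s, 0 < s < m -> f s != f (s + l.-1)) ->
  ck_dist_le a b m.
Proof.
move=> l_gt0 /ck_vertexP[adj_a end_a] /ck_vertexP[adj_b end_b] fa fb adj ends.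
have -> : a = window f 0 by symmetry; apply: window_eq => i; rewrite add0n; apply: fa.
have -> : b = window f m by symmetry; apply: window_eq.
apply: word_dist_le => // [p pml | s sm].
  have [pl | lp] := ltnP p.+1 l; first by rewrite !fa //; [apply: adj_a | lia].
  have [pm | mp] := ltnP p m; first by apply: adj; lia.
  by rewrite -(subnKC mp) -addnS !fb ?adj_b //; lia.
have [->|s_gt0] := posnP s; first by rewrite add0n !fa //; lia.
have [sm' | ms] := ltnP s m; first by apply: ends; lia.
have -> : s = m by lia.
by rewrite -{1}[m]addn0 !fb //; lia.
Qed.

End Walks.

Definition splice T k m (a c b : nat -> T) p :=
  if p < k then a p else if p < m then c (p - k) else b (p - m).

Section Splice.

Variables (T : Type) (k m : nat) (a c b : nat -> T).

Lemma splice_lo p : p < k -> splice k m a c b p = a p.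
Proof. by rewrite /splice => ->. Qed.

Lemma splice_mid p : k <= p < m -> splice k m a c b p = c (p - k).
Proof. by rewrite /splice => /andP[kp ->]; rewrite ltnNge kp. Qed.

Lemma splice_hi p : k <= m <= p -> splice k m a c b p = b (p - m).
Proof.
by rewrite /splice => /andP[km mp]; rewrite ltnNge (leq_trans km mp) ltnNge mp.
Qed.

End Splice.

Section Chains.

Variable T : eqType.
Implicit Types (u v c : nat -> T) (e x : T).

Definition chain u v n e c :=
  c n = e /\ forall i, i < n -> c i \notin [:: u i; v i; c i.+1].

(* [c_(i+1) != u_i] is what lets the chain move one position to the left in
   the word, giving a walk that is one step shorter. *)
Definition short_chain u v n e c :=
  chain u v n e c /\ forall i, i < n -> c i.+1 != u i.

Lemma chain_avoid u v n e c : chain u v n e c ->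
  forall i, i < n -> [/\ c i != u i, c i != v i & c i != c i.+1].
Proof. by move=> [_ cP] i /cP; rewrite !inE !negb_or => /and3P. Qed.

Definition scons x c i := if i is j.+1 then c j else x.

Lemma chain_scons u v n e c x :
  chain (u \o succn) (v \o succn) n e c -> x \notin [:: u 0; v 0; c 0] ->
  chain u v n.+1 e (scons x c).
Proof. by move=> [ce cP] xP; split=> // -[|i] // /cP. Qed.

Lemma short_chain_scons u v n e c x :
  short_chain (u \o succn) (v \o succn) n e c ->
  x \notin [:: u 0; v 0; c 0] -> c 0 != u 0 ->
  short_chain u v n.+1 e (scons x c).
Proof.
move=> [cP c'P] xP c0; split; first exact: chain_scons cP xP.
by case=> [|i] // /c'P.
Qed.

End Chains.

Lemma avoid_three (T : finType) (x y z : T) : 3 < #|T| ->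
  (exists x1 x2, [/\ x1 != x2, x1 \notin [:: x; y; z] & x2 \notin [:: x; y; z]])
  \/ (x \notin [:: y; z] /\ exists w, w \notin [:: x; y; z]).
Proof.
move=> T_gt3; set s := [:: x; y; z].
have cardCs : #|s| + #|[predC s]| = #|T| := cardC (mem s).
have size_s : #|s| <= 3 := card_size s.
have [two | one] := ltnP 1 #|[predC s]|.
  by left; have [x1 [x2 [x1P x2P x12]]] := card_gt1P two; exists x1, x2.
have /card_uniqP/andP[xP _] : #|s| = size s by rewrite [size s]/=; lia.
right; split=> //; have /card_gt0P[w wP] : 0 < #|[predC s]| by lia.
by exists w.
Qed.

Lemma chain_dichotomy (T : finType) (u v : nat -> T) n e z : 3 < #|T| ->
  (exists2 c, chain u v n e c & c 0 != z) \/
  (exists2 c, short_chain u v n e c & c 0 = z).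
Proof.
move=> T_gt3; elim: n u v z => [|n IHn] u v z.
  have const_e : short_chain u v 0 e (fun=> e) by [].
  by case: (eqVneq e z) => [<-|ez]; [right | left; case: const_e]; exists (fun=> e).
have [[x1 [x2 [x12 x1P x2P]]] | [zP [w wP]]] := avoid_three z (u 0) (v 0) T_gt3.
  left; move: x1P x2P; rewrite !inE !negb_or => /and3P[x1z x1u x1v] /and3P[x2z x2u x2v].
  have [[c cP c0] | [c [cP _] c0]] := IHn (u \o succn) (v \o succn) x1.
    exists (scons x1 c) => //; apply: chain_scons cP _.
    by rewrite !inE !negb_or x1u x1v eq_sym c0.
  exists (scons x2 c) => //; apply: chain_scons cP _.
  by rewrite !inE !negb_or x2u x2v c0 eq_sym x12.
move: zP wP; rewrite !inE !negb_or => /andP[zu zv] /and3P[wz wu wv].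
have [[c cP c0] | [c cP c0]] := IHn (u \o succn) (v \o succn) w.
  left; exists (scons w c); last by rewrite /= wz.
  by apply: chain_scons cP _; rewrite !inE !negb_or wu wv eq_sym c0.
right; exists (scons z c) => //; apply: short_chain_scons cP _ _; rewrite c0 //.
by rewrite !inE !negb_or zu zv eq_sym wz.
Qed.

Section Endpoints.

Variables (d n : nat) (A B : n.+2.-tuple 'I_d.+1).
Hypotheses (VA : ck_vertex A) (VB : ck_vertex B).
Local Notation a := (nth ord0 A).
Local Notation b := (nth ord0 B).

Lemma chain_dist_le c :
  chain (a \o succn) b n.+1 (b 0) c -> c 0 != a n.+1 -> ck_dist_le A B (n.+2 + n.+1).
Proof.
move=> cP c0; have [c_end _] := cP; set m := n.+2 + n.+1.
pose f := splice n.+2 m a c b.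
have f_lo p : p < n.+2 -> f p = a p by move=> pl; rewrite /f splice_lo.
have f_hi p : m <= p -> f p = b (p - m) by move=> mp; rewrite /f splice_hi //; lia.
have f_mid p : n.+2 <= p <= m -> f p = c (p - n.+2).
  move=> /andP[lp pm]; have [pm' | mp] := ltnP p m; first by rewrite /f splice_mid ?lp.
  have -> : p = m by lia.
  by rewrite f_hi // subnn -c_end; congr c; lia.
apply: (glued_dist_le (f := f)) => // [i _ | p /andP[lp pm] | s /andP[s0 sm]] /=.
- by rewrite f_hi ?addKn //; lia.
- have [pl | lp'] := ltnP p n.+2.
    have -> : p = n.+1 by lia.
    by rewrite f_lo // f_mid ?subnn 1?eq_sym //; lia.
  have /(chain_avoid cP)[_ _ cc] : p - n.+2 < n.+1 by lia.
  by rewrite !f_mid ?subSn //; lia.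
have [sl | ls] := ltnP s n.+2.
  have /(chain_avoid cP)[cs _ _] : s.-1 < n.+1 by lia.
  rewrite /= prednK // in cs.
  rewrite f_lo // f_mid; last by lia.
  have -> : s + n.+1 - n.+2 = s.-1 by lia.
  by rewrite eq_sym.
have /(chain_avoid cP)[_ cs _] : s - n.+2 < n.+1 by lia.
rewrite f_mid ?f_hi; [|lia|lia].
by have -> : s + n.+1 - m = s - n.+2 by lia.
Qed.

Lemma short_chain_dist_le c :
  short_chain (a \o succn) b n.+1 (b 0) c -> c 0 = a n.+1 -> ck_dist_le A B (n.+2 + n).
Proof.
move=> [cP c'P] c0; have [c_end _] := cP; set m := n.+2 + n.
pose f := splice n.+1 m a c b.
have f_hi p : m <= p -> f p = b (p - m) by move=> mp; rewrite /f splice_hi //; lia.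
have f_lo p : p < n.+2 -> f p = a p.
  rewrite ltnS leq_eqVlt => /orP[/eqP -> | pn]; last by rewrite /f splice_lo.
  by rewrite /f splice_mid ?subnn //; lia.
have f_mid p : n.+1 <= p <= m -> f p = c (p - n.+1).
  move=> /andP[lp pm]; have [pm' | mp] := ltnP p m; first by rewrite /f splice_mid ?lp.
  have -> : p = m by lia.
  by rewrite f_hi // subnn -c_end; congr c; lia.
apply: (glued_dist_le (f := f)) => // [i _ | p /andP[lp pm] | s /andP[s0 sm]] /=.
- by rewrite f_hi ?addKn //; lia.
- have /(chain_avoid cP)[_ _ cc] : p - n.+1 < n.+1 by lia.
  by rewrite !f_mid ?subSn //; lia.
have [sl | ls] := ltnP s n.+1.
  have /c'P cs : s.-1 < n.+1 by lia.
  rewrite /= prednK // in cs.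
  rewrite f_lo ?f_mid; [|lia|lia].
  by rewrite addnK eq_sym.
have /(chain_avoid cP)[_ cs _] : s - n.+1 < n.+1 by lia.
rewrite f_mid ?f_hi; [|lia|lia].
by have -> : s + n.+1 - m = s - n.+1 by lia.
Qed.

End Endpoints.

Theorem ck_diam_le_double_length d l : 2 < d -> 1 < l -> ck_diam_le d l (2 * l - 1).
Proof.
move=> d_gt2; case: l => [|[|n]] // _ A B VA VB.
have card_gt3 : 3 < #|'I_d.+1| by rewrite card_ord.
have [[c cP c0] | [c cP c0]] := chain_dichotomy (nth ord0 A \o succn) (nth ord0 B)
  n.+1 (nth ord0 B 0) (nth ord0 A n.+1) card_gt3.
  have -> : 2 * n.+2 - 1 = n.+2 + n.+1 by lia.
  by apply: (chain_dist_le VA VB cP).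
by apply: ck_dist_leW (short_chain_dist_le VA VB cP c0); lia.
Qed.

Theorem lemma7 (l : nat) : 3 <= l -> ck_diam_le 3 l (2 * l - 1).
Proof. by move=> l_ge3; apply: ck_diam_le_double_length; lia. Qed.
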